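(* Let $\mathcal{CB}(\mathcal{C},\mathcal{W}_t,\mathcal{W}_r)$ be a cellular blind interference alignment problem under sufficient coherence and let $\mathcal{GIC}(\mathcal{W}_r,\overline{\mathcal{W}}_r)$ be the corresponding Gaussian index coding problem, i.e., with the same desired message sets $\mathcal{W}_r$ and $\overline{\mathcal{W}}_r=\bigcup_{t\in\mathcal{T}:\,c_{rt}=0}\mathcal{W}_t$ for every receiver $r$. Then the maximum DoF achievable through linear beamforming in the Gaussian index coding problem equals the maximum DoF achievable through linear beamforming in the cellular blind interference alignment problem.
   Context: CB problem: transmitters $\mathcal{T}$, receivers $\mathcal{R}$, independent messages $\mathcal{W}$; transmitter $t$ holds $\mathcal{W}_t$ (pairwise disjoint, union $\mathcal{W}$); receiver $r$ desires $\mathcal{W}_r$; fixed connectivity $c_{rt}\in\{0,1\}$, $\mathcal{C}=\{(r,t):c_{rt}=1\}$. Single-antenna nodes; receiver $r$ observes $Y_r(n)=\sum_t c_{rt}H_{rt}(n)X_t(n)+Z_r(n)$ with unit-variance circularly symmetric complex Gaussian noise, power constraint $P$, nonzero channel coefficients (magnitudes bounded away from $0$ and $\infty$) known to the receiver for connected transmitters and unknown to transmitters (no CSIT). Sufficient coherence: the network coherence time may be taken as large as needed, so that all channel coefficients are constant over the $T$ channel uses of any scheme considered. GIC problem: one single-antenna transmitter knowing all messages, receiver $r$ observes $Y_r(n)=X(n)+Z_r(n)$, knows $\overline{\mathcal{W}}_r$ a priori, desires $\mathcal{W}_r$. Linear beamforming over $T$ channel uses: each message $W$ is assigned $d_W$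 information symbols sent along the columns of a $T\times d_W$ complex beamforming matrix $V_W$ (not depending on channel realizations), the transmitted signals of all messages being linearly superimposed (in CB, each message is sent by the transmitter where it originates). At receiver $r$, the interfering messages are those neither desired nor known a priori (in GIC: not in $\mathcal{W}_r\cup\overline{\mathcal{W}}_r$; in CB: messages from transmitters $t$ with $c_{rt}=1$ not in $\mathcal{W}_r$), and the scheme is feasible if at every receiver the columns of the (received, channel-scaled) beamforming matrices of its desired messages are linearly independent of each other and of the span of the received beamforming columns of its interfering messages. The DoF of such a scheme is $\sum_W d_W/T$; the maximum linear-beamforming DoF is the supremum over $T$ and feasible schemes. *)

From HB Require Import structures.
From mathcomp Require Import all_boot all_order all_algebra.
From mathcomp Require Import complex.
From mathcomp Require Import boolp classical_sets reals constructive_ereal ereal.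
Set Implicit Arguments. Unset Strict Implicit. Unset Printing Implicit Defensive.
Import Order.TTheory GRing.Theory Num.Theory.
Local Open Scope ring_scope.

Notation Cplx R := (complex R).

Section LinearBF.
Variables (R : realType) (M Rx : finType).
(* M : the messages;  Rx : the receivers. *)

(* A linear beamforming scheme over Tn channel uses: message W carries d W
   information symbols, sent along the columns of the Tn x (d W) matrix V W. *)

(* Generic per-receiver feasibility: [recv W] is the received (channel-scaled)
   beamforming matrix of message W at the receiver; [desired W] / [interf W]
   select the desired / interfering messages.  Feasible iff no nontrivial
   linear combination of the received columns of the desired messages lies in
   the span of the received columns of the interfering messages (i.e. the
   desired columns are linearly independent of each other and of that span). *)
Definition rx_feasible (Tn : nat) (d : M -> nat)
    (recv : forall W : M, 'M[Cplx R]_(Tn, d W))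
    (desired interf : pred M) : Prop :=
  forall a : forall W : M, 'cV[Cplx R]_(d W),
    (((\sum_(W | desired W) recv W *m a W)^T)
       <= \sum_(W | interf W) <<(recv W)^T>>)%MS ->
    forall W, desired W -> a W = 0.

(* des r W : receiver r desires W;  known r W : W belongs to Wbar_r. *)
Definition GIC_interf (des known : Rx -> pred M) (r : Rx) : pred M :=
  fun W => ~~ des r W && ~~ known r W.

Definition GIC_feasible (des known : Rx -> pred M) (Tn : nat) (d : M -> nat)
    (V : forall W : M, 'M[Cplx R]_(Tn, d W)) : Prop :=
  forall r : Rx, rx_feasible V (des r) (GIC_interf des known r).

Variable Tx : finType.
(* src W : the transmitter holding W (the W_t are disjoint with union W);
   c r t : connectivity c_rt;  h r t : channel coefficient H_rt (constant over
   the Tn channel uses by sufficient coherence). *)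
Definition CB_recv (src : M -> Tx) (c : Rx -> Tx -> bool)
    (h : Rx -> Tx -> Cplx R) (r : Rx) (Tn : nat) (d : M -> nat)
    (V : forall W : M, 'M[Cplx R]_(Tn, d W)) : forall W : M, 'M[Cplx R]_(Tn, d W) :=
  fun W => ((c r (src W))%:R * h r (src W)) *: V W.

Definition CB_interf (src : M -> Tx) (c : Rx -> Tx -> bool) (des : Rx -> pred M)
    (r : Rx) : pred M :=
  fun W => c r (src W) && ~~ des r W.

(* The beamformers do not depend on the channel (no CSIT): a scheme is
   feasible if it is feasible at every receiver for every realization of the
   nonzero channel coefficients. *)
Definition CB_feasible (src : M -> Tx) (c : Rx -> Tx -> bool) (des : Rx -> pred M)
    (Tn : nat) (d : M -> nat) (V : forall W : M, 'M[Cplx R]_(Tn, d W)) : Prop :=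
  forall h : Rx -> Tx -> Cplx R, (forall r t, h r t != 0) ->
  forall r : Rx, rx_feasible (CB_recv src c h r V) (des r) (CB_interf src c des r).

Definition lin_DoF_set (feas : forall Tn (d : M -> nat),
      (forall W : M, 'M[Cplx R]_(Tn, d W)) -> Prop) : set R :=
  [set x | exists Tn (d : M -> nat) (V : forall W : M, 'M[Cplx R]_(Tn, d W)),
     [/\ (0 < Tn)%N, feas Tn d V & x = (\sum_W d W)%:R / Tn%:R]].

Definition max_lin_DoF feas : \bar R :=
  ereal_sup [set x%:E | x in lin_DoF_set feas].

End LinearBF.

(* Under sufficient coherence, receiver r sees every message W of a connected
   transmitter through the nonzero scalar H_{r,src W}, and the messages of
   unconnected transmitters are exactly its GIC side information.  Both desired
   and interfering messages come from connected transmitters, and rescaling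
   beamformers by nonzero constants changes neither spans nor linear
   independence, so a linear scheme is CB-feasible iff it is GIC-feasible. *)

From HB Require Import structures.
From mathcomp Require Import all_boot all_order all_algebra.
From mathcomp Require Import complex.
From mathcomp Require Import boolp classical_sets reals constructive_ereal ereal.
Set Implicit Arguments. Unset Strict Implicit. Unset Printing Implicit Defensive.
Import GRing.Theory.
Local Open Scope ring_scope.

Section RxFeasible.
Variables (R : realType) (M : finType) (Tn : nat) (d : M -> nat).
Variables (des interf : pred M).

Lemma eq_rx_feasible (U V : forall W : M, 'M[Cplx R]_(Tn, d W)) :
    (forall W, des W || interf W -> U W = V W) ->
  rx_feasible U des interf <-> rx_feasible V des interf.
Proof.
move=> eqUV.
have eq_des a : \sum_(W | des W) U W *m a W = \sum_(W | des W) V W *m a W.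
  by apply: eq_bigr => W dW; rewrite eqUV ?dW.
have eq_interf :
    (\sum_(W | interf W) <<(U W)^T>> = \sum_(W | interf W) <<(V W)^T>>)%MS.
  by apply: eq_bigr => W iW; rewrite eqUV ?iW ?orbT.
rewrite /rx_feasible; split=> feas a.
- by rewrite -eq_des -eq_interf; apply: feas.
- by rewrite eq_des eq_interf; apply: feas.
Qed.

Lemma rx_feasible_scale (V : forall W : M, 'M[Cplx R]_(Tn, d W)) (k : M -> Cplx R) :
    (forall W, des W || interf W -> k W != 0) ->
  rx_feasible V des interf -> rx_feasible (fun W => k W *: V W) des interf.
Proof.
move=> k_neq0 feas a.
have span_scale : (\sum_(W | interf W) <<(k W *: V W)^T>>
                  = \sum_(W | interf W) <<(V W)^T>>)%MS.
  apply: eq_bigr => W iW; apply: eq_genmx; rewrite linearZ /=.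
  by apply: eqmx_scale; rewrite k_neq0 ?iW ?orbT.
have sum_scale : \sum_(W | des W) (k W *: V W) *m a W
               = \sum_(W | des W) V W *m (k W *: a W).
  by apply: eq_bigr => W _; rewrite -scalemxAl scalemxAr.
rewrite span_scale sum_scale => /feas scaled0 W dW.
move/eqP: (scaled0 W dW); rewrite scaler_eq0 => /orP[/eqP k0 | /eqP //].
by move: (k_neq0 W); rewrite dW k0 eqxx => /(_ isT).
Qed.

End RxFeasible.

Lemma eq_max_lin_DoF (R : realType) (M : finType)
    (feas1 feas2 : forall Tn (d : M -> nat), (forall W : M, 'M[Cplx R]_(Tn, d W)) -> Prop) :
    (forall Tn d V, feas1 Tn d V <-> feas2 Tn d V) ->
  max_lin_DoF feas1 = max_lin_DoF feas2.
Proof.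
move=> eq_feas; congr ereal_sup; congr image.
by apply/seteqP; split=> x [Tn [d [V [Tn_gt0 /eq_feas fV ->]]]]; exists Tn, d, V.
Qed.

Section CellularIndexCoding.
Variables (R : realType) (Tx Rx M : finType).
Variables (c : Rx -> Tx -> bool) (src : M -> Tx) (des : Rx -> pred M).
Hypothesis des_connected : forall r W, des r W -> c r (src W).

Let known r W := ~~ c r (src W).

Lemma GIC_interf_side_info r : GIC_interf des known r = CB_interf src c des r.
Proof. by apply: funext => W; rewrite /GIC_interf /CB_interf /known negbK andbC. Qed.

Lemma relevant_connected r W : des r W || CB_interf src c des r W -> c r (src W).
Proof. by case/orP=> [/des_connected | /andP[]]. Qed.

Lemma GIC_CB_feasibleE Tn d (V : forall W : M, 'M[Cplx R]_(Tn, d W)) :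
  GIC_feasible des known V <-> CB_feasible src c des V.
Proof.
split=> feas.
- move=> h h_neq0 r; apply: rx_feasible_scale.
    by move=> W /relevant_connected ->; rewrite mul1r.
  by rewrite -GIC_interf_side_info; apply: feas.
- move=> r; rewrite GIC_interf_side_info.
  have recv1 W : des r W || CB_interf src c des r W ->
      CB_recv src c (fun _ _ => 1) r V W = V W.
    by move/relevant_connected=> c_rW; rewrite /CB_recv c_rW mulr1 scale1r.
  apply: (iffLR (eq_rx_feasible recv1)).
  exact: feas (fun _ _ => 1) (fun _ _ => oner_neq0 _) r.
Qed.

End CellularIndexCoding.

Theorem theorem9 (R : realType) (Tx Rx M : finType)
  (c : Rx -> Tx -> bool) (src : M -> Tx) (des : Rx -> pred M)
  (hdes : forall r W, des r W -> c r (src W)) :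
  max_lin_DoF (fun Tn d V =>
      @GIC_feasible R M Rx des (fun r W => ~~ c r (src W)) Tn d V)
  = max_lin_DoF (fun Tn d V => @CB_feasible R M Rx Tx src c des Tn d V).
Proof. by apply: eq_max_lin_DoF => Tn d V; apply: GIC_CB_feasibleE. Qed.
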